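(* Let $V$ be a finite set, $E\subseteq V\times V$ a reflexive symmetric relation, $\mathcal{S}$ the collection of connected subsets of $V$ (as defined in the context), $\mu$ an additive measure on $2^V$ with $\mu(S)=0$ only for $S=\emptyset$, and $S^*\in\mathcal{S}\cup\{\emptyset\}$. Let $P_0$ be a valid partition of $V$. Then there exists a valid partition coarser than $P_0$ under which the percentile of $S^*$ is strictly less than (respectively, strictly greater than) the percentile of $S^*$ under $P_0$ if and only if there exist $l$ large, $m$ medium and $s$ small blocks of $P_0$ (blocks other than $S^*$), with $l+m+s\ge 2$, whose union lies in $\mathcal{S}$ and such that $$\frac{l+0.5m-1}{l+m+s-1}$$ is strictly greater than (respectively, strictly less than) the percentile of $S^*$ under $P_0$.
   Context: $G=(V,E)$ is viewed as a simple undirected graph. $\mathcal{S}$ is the set of nonempty $S\subseteq V$ that are connected: for every partition $S=A\sqcup B$ with $A,B\neq\emptyset$ there exist $a\in A$, $b\in B$ with $(a,b)\in E$. $\mu:2^V\to[0,\infty)$ satisfies $\mu(S)=\sum_{s\in S}\mu(\{s\})$. A valid partition is a partition $(S_1,\dots,S_c,S^* )$ of $V$ with $S_1,\dots,S_c\in\mathcal{S}$. The percentile of $S^*$ under it is $\frac{|\{i:\mu(S_i)>\mu(S^* )\}|+0.5|\{i:\mu(S_i)=\mu(S^* )\}|+0.5}{c+1}$. A set $S\in\mathcal{S}\setminus\{S^*\}$ is large if $\mu(S)>\mu(S^* )$, medium if $\mu(S)=\mu(S^* )$, small if $\mu(S)<\mu(S^* )$. A valid partition is coarser than $P_0$ if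 it still contains $S^*$ as a block and each of its other blocks is a union of blocks of $P_0$. *)

From mathcomp Require Import all_boot all_order all_algebra.
Set Implicit Arguments. Unset Strict Implicit. Unset Printing Implicit Defensive.
Import Order.TTheory GRing.Theory Num.Theory.
Local Open Scope ring_scope.

Section Defs.
Variable T : finType.

Definition connected_set (E : rel T) (S : {set T}) : Prop :=
  S != set0 /\
  forall A B : {set T}, A :|: B = S -> [disjoint A & B] -> A != set0 -> B != set0 ->
    exists a, exists b, [/\ a \in A, b \in B & E a b].

(* A valid partition (S_1,...,S_c,Sstar) of V is represented by the set P of the
   blocks S_1,...,S_c: they partition the complement of Sstar and are connected. *)
Definition valid_partition (E : rel T) (Sstar : {set T}) (P : {set {set T}}) : Prop :=
  partition P (~: Sstar) /\ forall S, S \in P -> connected_set E S.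

Variable R : realFieldType.

Definition large_blocks (mu : {set T} -> R) Sstar (P : {set {set T}}) :=
  [set S in P | mu Sstar < mu S].
Definition medium_blocks (mu : {set T} -> R) Sstar (P : {set {set T}}) :=
  [set S in P | mu S == mu Sstar].
Definition small_blocks (mu : {set T} -> R) Sstar (P : {set {set T}}) :=
  [set S in P | mu S < mu Sstar].

Definition percentile (mu : {set T} -> R) Sstar (P : {set {set T}}) : R :=
  ((#|large_blocks mu Sstar P|)%:R + 2^-1 * (#|medium_blocks mu Sstar P|)%:R + 2^-1)
  / (#|P|.+1)%:R.

(* P is coarser than P0: every block of P is a union of blocks of P0
   (Sstar is a block of both by construction). *)
Definition coarser (P P0 : {set {set T}}) : Prop :=
  forall B, B \in P -> exists Q : {set {set T}}, Q \subset P0 /\ B = cover Q.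

End Defs.

From mathcomp Require Import all_boot all_order all_algebra.
From mathcomp Require Import ring lra.
Set Implicit Arguments. Unset Strict Implicit. Unset Printing Implicit Defensive.
Import Order.TTheory GRing.Theory Num.Theory.
Local Open Scope ring_scope.

(* Score a block 1, 1/2 or 0 according as it is large, medium or small, so that
   percentile P * (#|P| + 1) = \sum_(B in P) score B + 1/2.  If each block B of a
   coarsening P of P0 is the union of the blocks Q_B of P0, then
   (percentile P0 - percentile P) * (#|P| + 1) is the sum over B of the gain of
   merging Q_B alone, and singletons Q_B gain nothing.  Hence some coarsening moves
   the percentile in a given direction iff merging a single connected family Q does.
   When the union of Q is large, the gain of merging Q has the sign of
   (l + m/2 - 1) / (#|Q| - 1) - percentile P0; otherwise every block of Q is
   small, and this ratio and the gain are both negative. *)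

Definition blocks_below (T : finType) (P0 : {set {set T}}) (B : {set T}) :=
  [set A in P0 | A \subset B].

Definition merge (T : finType) (P0 Q : {set {set T}}) := cover Q |: (P0 :\: Q).

Lemma partition_setD (T : finType) (P Q : {set {set T}}) (D : {set T}) :
  partition P D -> Q \subset P -> partition (P :\: Q) (D :\: cover Q).
Proof.
move=> /and3P[/eqP <- tiP notP0] sQP; apply/and3P; split; last first.
- by rewrite inE negb_and notP0 orbT.
- exact: trivIsetD.
apply/eqP/setP => x; rewrite inE; apply/bigcupP/andP => [[A /setDP[AP AnQ] xA] | ].
  split; last by apply/bigcupP; exists A.
  apply/bigcupP => -[A' A'Q xA']; case/negP: AnQ.
  by rewrite -(def_pblock tiP AP xA) (def_pblock tiP (subsetP sQP _ A'Q) xA').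
move=> [xnQ /bigcupP[A AP xA]]; exists A => //; rewrite inE AP andbT.
by apply: contraNN xnQ => AQ; apply/bigcupP; exists A.
Qed.

Section Coarsening.
Variables (T : finType) (D : {set T}) (P0 : {set {set T}}).
Hypothesis partP0 : partition P0 D.

Let tiP0 := partition_trivIset partP0.

Lemma blocks_below_cover (Q : {set {set T}}) :
  Q \subset P0 -> blocks_below P0 (cover Q) = Q.
Proof.
move=> sQP; apply/setP => A; rewrite inE; apply/andP/idP => [[AP sAQ] | AQ].
  have /set0Pn[x xA] := partition_neq0 partP0 AP.
  have /bigcupP[A' A'Q xA'] := subsetP sAQ x xA.
  by rewrite -(def_pblock tiP0 AP xA) (def_pblock tiP0 (subsetP sQP _ A'Q) xA').
by rewrite (subsetP sQP) ?bigcup_sup.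
Qed.

Lemma blocks_below1 A : A \in P0 -> blocks_below P0 A = [set A].
Proof. by move=> AP; rewrite -{1}(cover1 A) blocks_below_cover ?sub1set. Qed.

Lemma cover_blocks_below (P : {set {set T}}) B :
  coarser P P0 -> B \in P -> cover (blocks_below P0 B) = B.
Proof. by move=> coP /coP[Q [sQP ->]]; rewrite blocks_below_cover. Qed.

Lemma proper_cover (Q : {set {set T}}) A :
  Q \subset P0 -> (2 <= #|Q|)%N -> A \in Q -> A \proper cover Q.
Proof.
move=> sQP cardQ AQ; apply/properP; split; first exact: bigcup_sup.
have /card_gt0P[A' /setD1P[A'A A'Q]] : (0 < #|Q :\ A|)%N.
  by move: cardQ; rewrite (cardsD1 A) AQ.
have /set0Pn[x xA'] := partition_neq0 partP0 (subsetP sQP _ A'Q).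
exists x; first by apply/bigcupP; exists A'.
apply: contra A'A => xA; apply/eqP.
rewrite -(def_pblock tiP0 (subsetP sQP _ A'Q) xA').
by rewrite (def_pblock tiP0 (subsetP sQP _ AQ) xA).
Qed.

Section Merge.
Variable Q : {set {set T}}.
Hypothesis sQP : Q \subset P0.

Lemma partition_merge : cover Q != set0 -> partition (merge P0 Q) D.
Proof.
move=> Qn0; have sQD : cover Q \subset D.
  rewrite -(cover_partition partP0); apply/bigcupsP => A AQ.
  by rewrite (bigcup_max A) ?(subsetP sQP).
rewrite /merge -(setID D (cover Q)) (setIidPr sQD).
apply: partitionU1 (partition_setD partP0 sQP) Qn0 _.
by rewrite disjoints_subset; apply/subsetP => x xQ; rewrite !inE xQ.
Qed.

Lemma coarser_merge : coarser (merge P0 Q) P0.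
Proof.
move=> B /setU1P[-> | /setDP[BP _]]; first by exists Q.
by exists [set B]; rewrite sub1set cover1.
Qed.

Lemma sum_merge (R : nmodType) (g : {set {set T}} -> R) :
  (forall A, g [set A] = 0) -> \sum_(B in merge P0 Q) g (blocks_below P0 B) = g Q.
Proof.
move=> g1; rewrite (bigD1 (cover Q)) ?setU11 //= blocks_below_cover // big1 ?addr0 //.
move=> B /andP[/setU1P[-> | /setDP[BP _]] BnQ]; first by rewrite eqxx in BnQ.
by rewrite blocks_below1.
Qed.
End Merge.

Section Coarser.
Variable P : {set {set T}}.
Hypotheses (partP : partition P D) (coP : coarser P P0).

Lemma blocks_above A x :
  A \in P0 -> x \in A -> [set B in P | A \subset B] = [set pblock P x].
Proof.
move=> AP xA; have tiP := partition_trivIset partP.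
have xP : x \in cover P.
  by rewrite (cover_partition partP) -(cover_partition partP0); apply/bigcupP; exists A.
apply/setP => B; rewrite !inE; apply/andP/eqP => [[BP sAB] | ->].
  by rewrite (def_pblock tiP BP (subsetP sAB x xA)).
split; first exact: pblock_mem.
have /coP[Q [sQP defB]] := pblock_mem xP.
have := mem_pblock P x; rewrite xP defB => /bigcupP[A' A'Q xA'].
rewrite -(def_pblock tiP0 AP xA) (def_pblock tiP0 (subsetP sQP _ A'Q) xA').
exact: bigcup_sup.
Qed.

Lemma sum_blocks_below (R : nmodType) (F : {set T} -> R) :
  \sum_(B in P) \sum_(A in blocks_below P0 B) F A = \sum_(A in P0) F A.
Proof.
rewrite (exchange_big_dep (mem P0)) /=; last by move=> B A _; rewrite inE => /andP[].
apply: eq_bigr => A AP; have /set0Pn[x xA] := partition_neq0 partP0 AP.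
under eq_bigl do rewrite inE AP.
by rewrite -big_set /= (blocks_above AP xA) big_set1.
Qed.
End Coarser.
End Coarsening.

Lemma coarsening_criterion (T : finType) (E : rel T) (Sstar : {set T})
    (P0 : {set {set T}}) (R : realDomainType) (g : {set {set T}} -> R)
    (Pc Qc : {set {set T}} -> Prop) :
  valid_partition E Sstar P0 -> (forall A, g [set A] = 0) ->
  (forall P, partition P (~: Sstar) -> coarser P P0 ->
     Pc P <-> 0 < \sum_(B in P) g (blocks_below P0 B)) ->
  (forall Q : {set {set T}}, Q \subset P0 -> (2 <= #|Q|)%N -> Qc Q <-> 0 < g Q) ->
  (exists P, [/\ valid_partition E Sstar P, coarser P P0 & Pc P]) <->
  (exists Q : {set {set T}},
     [/\ Q \subset P0, (2 <= #|Q|)%N, connected_set E (cover Q) & Qc Q]).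
Proof.
move=> [partP0 connP0] g1 PcE QcE; split.
- case=> P [[partP connP] coP /(PcE P partP coP) sum_gt0].
  have [B BP gB] : exists2 B, B \in P & 0 < g (blocks_below P0 B).
    apply/exists_inP; apply: contraTT sum_gt0 => /exists_inPn g_le0.
    by rewrite -leNgt sumr_le0 // => B /g_le0; rewrite -leNgt.
  set Q := blocks_below P0 B in gB *.
  have sQP : Q \subset P0 by apply/subsetP => A; rewrite inE => /andP[].
  have covQ : cover Q = B := cover_blocks_below partP0 coP BP.
  have cardQ : (2 <= #|Q|)%N.
    have Qn0 : Q != set0.
      apply: contraNneq (partition_neq0 partP BP) => Q0.
      by rewrite -covQ Q0 /cover big_set0.
    rewrite ltnNge; apply: contraTN gB.
    rewrite leq_eqVlt ltnS leqn0 cards_eq0 (negbTE Qn0) orbF.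
    by case/cards1P => A ->; rewrite g1 ltxx.
  by exists Q; split => //; [rewrite covQ; apply: connP | apply/QcE].
- case=> Q [sQP cardQ connQ /(QcE Q sQP cardQ) gQ].
  have partM := partition_merge partP0 sQP connQ.1.
  exists (merge P0 Q); split; first split => //.
  + by move=> B /setU1P[-> // | /setDP[BP _]]; apply: connP0.
  + exact: coarser_merge.
  + by apply/(PcE _ partM (coarser_merge sQP)); rewrite (sum_merge partP0).
Qed.

Lemma natr_card_sep (R : pzSemiRingType) (I : finType) (A : {set I}) (p : pred I) :
  #|[set i in A | p i]|%:R = \sum_(i in A) (p i)%:R :> R.
Proof.
rewrite -sum1_card natr_sum big_mkcond /= [RHS]big_mkcond /=.
by apply: eq_bigr => i _; rewrite inE; case: (i \in A); case: (p i).
Qed.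

Section Score.
Variables (T : finType) (R : realFieldType) (mu : {set T} -> R) (Sstar : {set T}).

Definition score (S : {set T}) : R :=
  (nat_of_bool (mu Sstar < mu S))%:R + 2^-1 * (nat_of_bool (mu S == mu Sstar))%:R.

Lemma score_ge0 S : 0 <= score S.
Proof. by rewrite addr_ge0 ?mulr_ge0 ?invr_ge0. Qed.

Lemma score_small S : mu S < mu Sstar -> score S = 0.
Proof. by move=> lt; rewrite /score ltNge (ltW lt) (lt_eqF lt) mulr0 addr0. Qed.

Lemma score_large S : mu Sstar < mu S -> score S = 1.
Proof. by move=> gt; rewrite /score gt (gt_eqF gt) mulr0 addr0. Qed.

Lemma sum_score Q :
  #|large_blocks mu Sstar Q|%:R + 2^-1 * #|medium_blocks mu Sstar Q|%:R
  = \sum_(A in Q) score A.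
Proof. by rewrite !natr_card_sep mulr_sumr -big_split. Qed.

Lemma percentileE P :
  percentile mu Sstar P = (\sum_(A in P) score A + 2^-1) / #|P|.+1%:R.
Proof. by rewrite /percentile sum_score. Qed.

Lemma percentile_gt0 P : 0 < percentile mu Sstar P.
Proof.
rewrite percentileE divr_gt0 // ltr_wpDl ?invr_gt0 //.
by apply: sumr_ge0 => A _; apply: score_ge0.
Qed.

Definition merge_gain (p : R) (Q : {set {set T}}) : R :=
  \sum_(A in Q) score A - score (cover Q) - p * (#|Q|%:R - 1).

Lemma merge_gain1 p A : merge_gain p [set A] = 0.
Proof. by rewrite /merge_gain big_set1 cover1 cards1 !subrr mulr0 subr0. Qed.

Lemma sum_merge_gain D P0 P :
  partition P0 D -> partition P D -> coarser P P0 ->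
  \sum_(B in P) merge_gain (percentile mu Sstar P0) (blocks_below P0 B)
  = (percentile mu Sstar P0 - percentile mu Sstar P) * #|P|.+1%:R.
Proof.
move=> partP0 partP coP; set p0 := percentile mu Sstar P0.
have scoreP0 : \sum_(A in P0) score A = p0 * #|P0|.+1%:R - 2^-1.
  by rewrite /p0 percentileE divfK ?pnatr_eq0 ?addrK.
have scoreP : \sum_(B in P) score B = percentile mu Sstar P * #|P|.+1%:R - 2^-1.
  by rewrite percentileE divfK ?pnatr_eq0 ?addrK.
have cardP0 : \sum_(B in P) #|blocks_below P0 B|%:R = #|P0|%:R :> R.
  rewrite -sumr_const -(sum_blocks_below partP0 partP coP).
  by apply: eq_bigr => B _; rewrite sumr_const.
rewrite /merge_gain !sumrB -mulr_sumr sumrB (sum_blocks_below partP0 partP coP).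
under [X in _ - X - _]eq_bigr => B BP do rewrite (cover_blocks_below partP0 coP BP).
rewrite scoreP0 scoreP cardP0 sumr_const -!natr1; ring.
Qed.

Section Additive.
Hypotheses (mu_ge0 : forall S, 0 <= mu S)
  (mu_add : forall S, mu S = \sum_(s in S) mu [set s])
  (mu_eq0 : forall S, mu S = 0 -> S = set0).

Lemma mu_proper (A B : {set T}) : A \proper B -> mu A < mu B.
Proof.
case/properP => sAB [x xB xnA].
rewrite [mu B]mu_add (big_setID A) /= (setIidPr sAB) -!mu_add ltrDl lt_def mu_ge0 andbT.
by apply/eqP => /mu_eq0/setP/(_ x); rewrite !inE xB xnA.
Qed.

Lemma merge_gain_sign (D : {set T}) P0 p (Q : {set {set T}}) :
  partition P0 D -> Q \subset P0 -> (2 <= #|Q|)%N -> 0 < p ->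
  let ratio := (\sum_(A in Q) score A - 1) / (#|Q|%:R - 1) in
  ((0 < merge_gain p Q) = (p < ratio)) * ((merge_gain p Q < 0) = (ratio < p)).
Proof.
move=> partP0 sQP cardQ p_gt0 ratio.
have Q1_gt0 : 0 < #|Q|%:R - 1 :> R by rewrite subr_gt0 ltr1n.
have [large | not_large] := ltP (mu Sstar) (mu (cover Q)).
  rewrite /merge_gain score_large // /ratio ltr_pdivlMr // ltr_pdivrMr //.
  by split; apply/idP/idP => ?; lra.
have small_blocks A : A \in Q -> score A = 0.
  move=> AQ; rewrite score_small // (lt_le_trans _ not_large) //.
  by rewrite mu_proper // (proper_cover partP0).
have gain_lt0 : merge_gain p Q < 0.
  rewrite /merge_gain big1 // sub0r -opprD oppr_lt0 ltr_wpDl ?score_ge0 //.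
  by rewrite mulr_gt0.
have ratio_lt0 : ratio < 0.
  by rewrite /ratio big1 // sub0r mulNr oppr_lt0 mul1r invr_gt0.
have ratio_lt_p := lt_trans ratio_lt0 p_gt0.
by rewrite gain_lt0 ratio_lt_p !ltNge (ltW gain_lt0) (ltW ratio_lt_p).
Qed.

End Additive.
End Score.

Theorem lemma2p3 (T : finType) (E : rel T) (R : realFieldType)
  (mu : {set T} -> R) (Sstar : {set T}) (P0 : {set {set T}}) :
  reflexive E -> symmetric E ->
  (forall S : {set T}, 0 <= mu S) ->
  (forall S : {set T}, mu S = \sum_(s in S) mu [set s]) ->
  (forall S : {set T}, mu S = 0 -> S = set0) ->
  (connected_set E Sstar \/ Sstar = set0) ->
  valid_partition E Sstar P0 ->
  ((exists P, [/\ valid_partition E Sstar P, coarser P P0 &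
                  percentile mu Sstar P < percentile mu Sstar P0]) <->
   (exists Q : {set {set T}},
      [/\ Q \subset P0, (2 <= #|Q|)%N, connected_set E (cover Q) &
          percentile mu Sstar P0 <
          ((#|large_blocks mu Sstar Q|)%:R + 2^-1 * (#|medium_blocks mu Sstar Q|)%:R - 1)
          / ((#|Q|)%:R - 1)]))
  /\
  ((exists P, [/\ valid_partition E Sstar P, coarser P P0 &
                  percentile mu Sstar P0 < percentile mu Sstar P]) <->
   (exists Q : {set {set T}},
      [/\ Q \subset P0, (2 <= #|Q|)%N, connected_set E (cover Q) &
          ((#|large_blocks mu Sstar Q|)%:R + 2^-1 * (#|medium_blocks mu Sstar Q|)%:R - 1)
          / ((#|Q|)%:R - 1) < percentile mu Sstar P0])).
Proof.
move=> _ _ mu_ge0 mu_add mu_eq0 _ vP0; have partP0 := vP0.1.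
set p0 := percentile mu Sstar P0.
have p0_gt0 : 0 < p0 := percentile_gt0 mu Sstar P0.
have sign (Q : {set {set T}}) (sQP : Q \subset P0) (cardQ : (2 <= #|Q|)%N) :=
  merge_gain_sign Sstar mu_ge0 mu_add mu_eq0 partP0 sQP cardQ p0_gt0.
split.
- apply: (coarsening_criterion (g := merge_gain mu Sstar p0) vP0)
    => [A | P partP coP | Q sQP cardQ].
  + exact: merge_gain1.
  + by rewrite (sum_merge_gain mu Sstar partP0 partP coP) pmulr_lgt0 ?subr_gt0.
  + by rewrite sum_score (sign Q sQP cardQ).1.
- apply: (coarsening_criterion (g := fun Q => - merge_gain mu Sstar p0 Q) vP0)
    => [A | P partP coP | Q sQP cardQ].
  + by rewrite merge_gain1 oppr0.
  + rewrite sumrN (sum_merge_gain mu Sstar partP0 partP coP) -mulNr opprB.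
    by rewrite pmulr_lgt0 ?subr_gt0.
  + by rewrite sum_score oppr_gt0 (sign Q sQP cardQ).2.
Qed.
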